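(* Let $D:\mathbb R^2\setminus\{0\}\to\mathbb R$ be nonnegative, bounded and continuously differentiable, and consider $\ddot x+D(x)\dot x=-x/|x|^3$. Let $x_n:\,]-\infty,0]\to\mathbb R^2\setminus\{0\}$ be a sequence of nonrectilinear solutions, and set $r_n=|x_n|$. Suppose that for some $r_*>0$ we have $r_n(0)=r_*$ for all $n$ and $\dot r_n(0)\to+\infty$. Then for all $n$ large enough: (i) there exists $\mathfrak t_n<0$ with $\dot r_n(\mathfrak t_n)=0$, and moreover these can be chosen with $\lim_{n\to\infty}\mathfrak t_n=0$; (ii) $\dot r_n(t)>0$ for all $t\in\,]\mathfrak t_n,0[$ and $\dot r_n(t)<0$ for all $t<\mathfrak t_n$; (iii) there exists $\tau_n<\mathfrak t_n$ with $r_n(\tau_n)=r_*$; moreover $\lim_{n\to\infty}\tau_n=0$ and $\lim_{n\to\infty}\dot r_n(\tau_n)=-\infty$.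
   Context: A solution is nonrectilinear if its angular momentum $\det(x,\dot x)$ is not identically zero; such solutions are defined on all of $]-\infty,0]$ when maximal in the past. *)

From Stdlib Require Import Reals.
From Coquelicot Require Import Coquelicot.
Open Scope R_scope.

Definition nrm (a b : R) : R := sqrt (a ^ 2 + b ^ 2).

(* [ldrv f t l]: f has derivative l at t relative to the half-line ]-oo,0]
   (two-sided derivative when t < 0, left derivative when t = 0). *)
Definition ldrv (f : R -> R) (t l : R) : Prop :=
  filterlim (fun h => (f (t + h) - f t) / h)
    (within (fun h => h <> 0 /\ t + h <= 0) (locally 0)) (locally l).

Definition C1_punctured (D : R -> R -> R) : Prop :=
  exists D1 D2 : R -> R -> R, forall y1 y2 : R, (y1, y2) <> (0, 0) ->
    differentiable_pt_lim D y1 y2 (D1 y1 y2) (D2 y1 y2) /\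
    continuity_2d_pt D1 y1 y2 /\ continuity_2d_pt D2 y1 y2.

(* (x1,x2) : ]-oo,0] -> R^2\{0} solves x'' + D(x) x' = -x/|x|^3,
   with velocity (v1,v2) = x'. *)
Definition is_solution (D : R -> R -> R) (x1 x2 v1 v2 : R -> R) : Prop :=
  forall t : R, t <= 0 ->
    (x1 t, x2 t) <> (0, 0) /\
    ldrv x1 t (v1 t) /\ ldrv x2 t (v2 t) /\
    ldrv v1 t (- D (x1 t) (x2 t) * v1 t - x1 t / (nrm (x1 t) (x2 t)) ^ 3) /\
    ldrv v2 t (- D (x1 t) (x2 t) * v2 t - x2 t / (nrm (x1 t) (x2 t)) ^ 3).

(* Nonrectilinear: the angular momentum det(x, x') is not identically zero. *)
Definition nonrectilinear (x1 x2 v1 v2 : R -> R) : Prop :=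
  exists t : R, t <= 0 /\ x1 t * v2 t - x2 t * v1 t <> 0.

(* Write q = |x|^2 ([sqdist]), g = x.v = r r' ([radial]), w = |v|^2 ([speed2]),
   E = w/2 - 1/r ([energy]) and c = det(x, v) ([angmom]).  Along a solution E' = -D w <= 0,
   g' = w - D g - 1/r >= 2 E(0) - D g and c' = -D c.  When r'(0) = V is large, so is
   E(0) >= V^2/2 - 1/r(0); going backwards in time, g therefore decreases at rate about 2 E(0)
   and vanishes at a time tf = O(1/V), where r has its minimum.  Before tf,
   g <= 2 E(0) (t - tf), so q grows quadratically and is back to q(0) at a time tau = O(1/V).
   There w(tau) >= w(0) because E(tau) >= E(0), while c^2 has grown by at most the factor
   e^(2M|tau|) = 1 + O(1/V); Lagrange's identity c^2 + g^2 = q w then gives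
   g(tau)^2 >= g(0)^2 - O(g(0)), i.e. r'(tau) <= -V + O(1).
   The solutions are only given on ]-oo,0]; they are extended linearly beyond 0 so that the
   two-sided calculus of Coquelicot (mean value theorem, derivative rules) applies. *)

From Stdlib Require Import Reals Lra Classical ClassicalEpsilon.
From Coquelicot Require Import Coquelicot.
Open Scope R_scope.

Lemma ldrv_ball f t l : ldrv f t l -> forall eps : posreal, exists delta : posreal,
  forall h, Rabs h < delta -> h <> 0 -> t + h <= 0 -> Rabs ((f (t + h) - f t) / h - l) < eps.
Proof.
  intros Hf eps. destruct (Hf _ (locally_ball l eps)) as [delta Hd].
  exists delta. intros h Hh Hh0 Hth. apply (Hd h); [|split; assumption].
  change (Rabs (h - 0) < delta). now rewrite Rminus_0_r.
Qed.

Lemma ldrv_of_is_derive f t l : is_derive f t l -> ldrv f t l.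
Proof.
  intros Hf P [eps HP]. apply is_derive_Reals in Hf.
  destruct (Hf eps (cond_pos eps)) as [delta Hd]. exists delta.
  intros h Hh [Hh0 _]. apply HP, Hd; [exact Hh0|].
  change (Rabs (h - 0) < delta) in Hh. now rewrite Rminus_0_r in Hh.
Qed.

Lemma ldrv_ext f g t l : t <= 0 -> (forall s, s <= 0 -> f s = g s) -> ldrv f t l -> ldrv g t l.
Proof.
  intros Ht Hfg. apply filterlim_ext_loc.
  exists (mkposreal 1 Rlt_0_1). intros h _ [_ Hth]. now rewrite !Hfg by lra.
Qed.

Lemma left_punctured_proper t : t <= 0 ->
  ProperFilter' (within (fun h => h <> 0 /\ t + h <= 0) (locally 0)).
Proof.
  intros Ht. split; [|apply within_filter, locally_filter].
  intros [delta Hd]. pose proof (cond_pos delta). apply (Hd (- delta / 2)).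
  - change (Rabs (- delta / 2 - 0) < delta). rewrite Rminus_0_r, Rabs_left; lra.
  - split; lra.
Qed.

Lemma ldrv_unique f t l1 l2 : t <= 0 -> ldrv f t l1 -> ldrv f t l2 -> l1 = l2.
Proof.
  intros Ht.
  apply (@filterlim_locally_unique _ R_AbsRing R_NormedModule _ (left_punctured_proper t Ht)).
Qed.

Definition extend (f : R -> R) (l s : R) : R :=
  if Rle_dec s 0 then f s else f 0 + l * s.

Lemma extend_le f l s : s <= 0 -> extend f l s = f s.
Proof. intros Hs. unfold extend. destruct (Rle_dec s 0); [reflexivity|lra]. Qed.

Lemma is_derive_extend f f' t : (forall s, s <= 0 -> ldrv f s (f' s)) -> t <= 0 ->
  is_derive (extend f (f' 0)) t (f' t).
Proof.
  intros Hf Ht. apply is_derive_Reals. intros eps Heps.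
  destruct (ldrv_ball _ _ _ (Hf t Ht) (mkposreal eps Heps)) as [delta Hd]; simpl in Hd.
  destruct (Rle_lt_or_eq_dec t 0 Ht) as [Htn | ->].
  - assert (Hpos : 0 < Rmin delta (- t)) by (apply Rmin_glb_lt; [apply cond_pos|lra]).
    exists (mkposreal _ Hpos). intros h Hh0 Hh; simpl in Hh.
    pose proof (Rmin_l delta (- t)). pose proof (Rmin_r delta (- t)).
    pose proof (Rabs_def2 _ _ Hh).
    rewrite !extend_le by lra. apply Hd; lra.
  - exists delta. intros h Hh0 Hh. rewrite Rplus_0_l, (extend_le f (f' 0) 0) by lra.
    unfold extend at 1. destruct (Rle_dec h 0) as [Hneg|Hpos].
    + specialize (Hd h Hh Hh0 ltac:(lra)). now rewrite Rplus_0_l in Hd.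
    + replace ((f 0 + f' 0 * h - f 0) / h - f' 0) with 0 by (field; exact Hh0).
      now rewrite Rabs_R0.
Qed.

Lemma is_derive_continuity_pt (F : R -> R) t l : is_derive F t l -> continuity_pt F t.
Proof. intros HF. apply derivable_continuous_pt. exists l. now apply is_derive_Reals. Qed.

Lemma is_derive_mvt (F dF : R -> R) a b : a < b ->
  (forall t, a <= t <= b -> is_derive F t (dF t)) ->
  exists c, a < c < b /\ F b - F a = dF c * (b - a).
Proof.
  intros Hab HF. destruct (MVT_cor2 F dF a b Hab) as [c [E Hc]]; [|now exists c].
  intros t Ht. now apply is_derive_Reals, HF.
Qed.

Lemma is_derive_nonneg_le (F dF : R -> R) a b : a <= b ->
  (forall t, a <= t <= b -> is_derive F t (dF t)) -> (forall t, a < t < b -> 0 <= dF t) ->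
  F a <= F b.
Proof.
  intros Hab HF Hd. destruct (Req_dec a b) as [<- | Hne]; [lra|].
  destruct (is_derive_mvt F dF a b) as (c & Hc & E); [lra|exact HF|].
  specialize (Hd c Hc). nra.
Qed.

Lemma is_derive_pos_lt (F dF : R -> R) a b : a < b ->
  (forall t, a <= t <= b -> is_derive F t (dF t)) -> (forall t, a < t < b -> 0 < dF t) ->
  F a < F b.
Proof.
  intros Hab HF Hd. destruct (is_derive_mvt F dF a b) as (c & Hc & E); [lra|exact HF|].
  specialize (Hd c Hc). nra.
Qed.

Lemma is_derive_nonpos_ge (F dF : R -> R) a b : a <= b ->
  (forall t, a <= t <= b -> is_derive F t (dF t)) -> (forall t, a < t < b -> dF t <= 0) ->
  F b <= F a.
Proof.
  intros Hab HF Hd.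
  enough (- F a <= - F b) by lra.
  apply (is_derive_nonneg_le (fun s => - F s) (fun s => - dF s) a b Hab).
  - intros t Ht. now apply (is_derive_opp F), HF.
  - intros t Ht. specialize (Hd t Ht). lra.
Qed.

Lemma is_derive_le_increment (F G dF dG : R -> R) a b : a <= b ->
  (forall t, a <= t <= b -> is_derive F t (dF t)) ->
  (forall t, a <= t <= b -> is_derive G t (dG t)) ->
  (forall t, a < t < b -> dF t <= dG t) ->
  F b - F a <= G b - G a.
Proof.
  intros Hab HF HG Hd.
  enough (G a - F a <= G b - F b) by lra.
  apply (is_derive_nonneg_le (fun s => G s - F s) (fun s => dG s - dF s) a b Hab).
  - intros t Ht. now apply (is_derive_minus G F); [apply HG | apply HF].
  - intros t Ht. specialize (Hd t Ht). lra.
Qed.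

Lemma continuity_pt_pos_near (F : R -> R) m : continuity_pt F m -> 0 < F m ->
  exists delta, 0 < delta /\ forall t, Rabs (t - m) < delta -> 0 < F t.
Proof.
  intros HF Hm. destruct (HF (F m) Hm) as [delta [Hdelta Hd]].
  exists delta. split; [exact Hdelta|]. intros t Ht.
  destruct (Req_dec t m) as [-> | Htm]; [exact Hm|].
  assert (Hclose : Rabs (F t - F m) < F m) by (apply Hd; repeat split; auto).
  apply Rabs_def2 in Hclose. lra.
Qed.

Lemma last_zero (F : R -> R) a b : a <= b -> (forall t, a <= t <= b -> continuity_pt F t) ->
  F a <= 0 -> 0 < F b -> exists c, a <= c < b /\ F c = 0 /\ forall t, c < t <= b -> 0 < F t.
Proof.
  intros Hab HF Ha Hb.
  set (S := fun t => a <= t <= b /\ F t <= 0).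
  destruct (completeness S) as [m [Hub Hlub]].
  { exists b. intros t [Ht _]. lra. }
  { exists a. split; [lra|exact Ha]. }
  assert (Ham : a <= m) by (apply Hub; split; [lra|exact Ha]).
  assert (Hmb : m <= b) by (apply Hlub; intros t [Ht _]; lra).
  assert (Hafter : forall t, m < t <= b -> 0 < F t).
  { intros t Ht. apply Rnot_le_lt. intros Hle.
    assert (t <= m) by (apply Hub; split; [lra|exact Hle]). lra. }
  assert (Hm_nonpos : F m <= 0).
  { apply Rnot_lt_le. intros Hm.
    destruct (continuity_pt_pos_near F m (HF m (conj Ham Hmb)) Hm) as [d [Hd HFd]].
    assert (Hbound : m <= Rmax a (m - d / 2)).
    { apply Hlub. intros t [Ht HFt].
      destruct (Rle_lt_dec t (m - d)) as [Hle|Hlt].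
      - pose proof (Rmax_r a (m - d / 2)). lra.
      - assert (t <= m) by (apply Hub; split; assumption).
        assert (0 < F t) by (apply HFd; apply Rabs_def1; lra). lra. }
    destruct (Rmax_Rle a (m - d / 2) m) as [Hmax _].
    destruct (Hmax Hbound) as [Hma|]; [|lra].
    replace m with a in Hm by lra. lra. }
  assert (Hmb' : m < b) by (destruct (Req_dec m b) as [->|]; lra).
  assert (Hm_zero : F m = 0).
  { apply Rle_antisym; [exact Hm_nonpos|]. apply Rnot_lt_le. intros Hm.
    destruct (continuity_pt_pos_near (fun s => - F s) m) as [d [Hd HFd]].
    { apply continuity_pt_opp, HF. lra. }
    { lra. }
    set (t := Rmin b (m + d / 2)).
    assert (m < t) by (apply Rmin_glb_lt; lra).
    assert (t <= m + d / 2) by apply Rmin_r.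
    assert (0 < - F t) by (apply HFd; apply Rabs_def1; lra).
    assert (0 < F t) by (apply Hafter; split; [lra|apply Rmin_l]). lra. }
  exists m. repeat split; auto; lra.
Qed.

Lemma is_derive_pos_crossing (F : R -> R) c d : is_derive F c d -> 0 < d ->
  exists delta, 0 < delta /\ forall h, 0 < h < delta -> F (c - h) < F c < F (c + h).
Proof.
  intros HF Hd. apply is_derive_Reals in HF.
  destruct (HF d Hd) as [delta Hdelta].
  exists delta. split; [apply cond_pos|]. intros h Hh.
  assert (Hr := Hdelta h ltac:(lra) ltac:(rewrite Rabs_right; lra)).
  assert (Hl := Hdelta (- h) ltac:(lra) ltac:(rewrite Rabs_left; lra)).
  apply Rabs_def2 in Hr, Hl.
  assert (0 < (F (c + h) - F c) / h) by lra.
  assert (0 < (F (c + - h) - F c) / - h) by lra.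
  replace (c - h) with (c + - h) by ring. split.
  - enough (0 < F c - F (c + - h)) by lra.
    replace (F c - F (c + - h)) with ((F (c + - h) - F c) / - h * h) by (field; lra).
    apply Rmult_lt_0_compat; lra.
  - enough (0 < F (c + h) - F c) by lra.
    replace (F (c + h) - F c) with ((F (c + h) - F c) / h * h) by (field; lra).
    apply Rmult_lt_0_compat; lra.
Qed.

Lemma neg_before_neg (F dF : R -> R) a b : (forall t, a <= t <= b -> is_derive F t (dF t)) ->
  (forall t, a <= t <= b -> F t = 0 -> 0 < dF t) -> F b < 0 ->
  forall t, a <= t <= b -> F t < 0.
Proof.
  intros HF Hzero Hb t Ht. apply Rnot_le_lt. intros Hnn.
  destruct (last_zero (fun s => - F s) t b) as (c & Hc & Hc0 & Hafter); try lra.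
  { intros s Hs. apply continuity_pt_opp. eapply is_derive_continuity_pt, HF. lra. }
  destruct (is_derive_pos_crossing F c (dF c)) as (d & Hd & Hcross).
  { apply HF; lra. }
  { apply Hzero; lra. }
  set (h := Rmin d (b - c) / 2).
  assert (0 < Rmin d (b - c)) by (apply Rmin_glb_lt; lra).
  pose proof (Rmin_l d (b - c)). pose proof (Rmin_r d (b - c)).
  assert (F c < F (c + h)) by (apply (Hcross h); unfold h; lra).
  assert (0 < - F (c + h)) by (apply Hafter; unfold h; lra). lra.
Qed.

Lemma neg_before_zero (F dF : R -> R) a b : (forall t, a <= t <= b -> is_derive F t (dF t)) ->
  (forall t, a <= t <= b -> F t = 0 -> 0 < dF t) -> F b = 0 ->
  forall t, a <= t < b -> F t < 0.
Proof.
  intros HF Hzero Hb t Ht.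
  destruct (is_derive_pos_crossing F b (dF b)) as (d & Hd & Hcross).
  { apply HF; lra. }
  { apply Hzero; [lra|exact Hb]. }
  set (h := Rmin d (b - t) / 2).
  assert (0 < Rmin d (b - t)) by (apply Rmin_glb_lt; lra).
  pose proof (Rmin_l d (b - t)). pose proof (Rmin_r d (b - t)).
  apply (neg_before_neg F dF a (b - h)); try (unfold h; lra).
  - intros s Hs. apply HF. unfold h in Hs. lra.
  - intros s Hs. apply Hzero. unfold h in Hs. lra.
  - assert (F (b - h) < F b) by (apply (Hcross h); unfold h; lra). lra.
Qed.

Lemma sqrt_pow3 a : 0 <= a -> sqrt a ^ 3 = a * sqrt a.
Proof. intros Ha. rewrite <- (pow2_sqrt a Ha) at 2. ring. Qed.

Lemma exp_sub1_le x : 0 <= x -> exp x - 1 <= x * exp x.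
Proof.
  intros Hx. pose proof (exp_ineq1_le (- x)) as H.
  assert (Hinv : exp x * exp (- x) = 1) by (rewrite <- exp_plus, Rplus_opp_r; apply exp_0).
  pose proof (exp_pos x). nra.
Qed.

Lemma exp_le x y : x <= y -> exp x <= exp y.
Proof. intros [Hlt | ->]; [left; now apply exp_increasing | right; reflexivity]. Qed.

Section DampedKepler.

Variables X1 X2 V1 V2 Dt : R -> R.
Variable M : R.

Definition sqdist t := X1 t ^ 2 + X2 t ^ 2.
Definition radial t := X1 t * V1 t + X2 t * V2 t.
Definition speed2 t := V1 t ^ 2 + V2 t ^ 2.
Definition angmom t := X1 t * V2 t - X2 t * V1 t.
Definition energy t := speed2 t / 2 - 1 / sqrt (sqdist t).
Definition radial_slope t := speed2 t - Dt t * radial t - 1 / sqrt (sqdist t).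

Lemma lagrange_identity t : angmom t ^ 2 + radial t ^ 2 = sqdist t * speed2 t.
Proof. unfold angmom, radial, sqdist, speed2. ring. Qed.

Hypothesis sqdist_pos : forall t, t <= 0 -> 0 < sqdist t.
Hypothesis X1_derive : forall t, t <= 0 -> is_derive X1 t (V1 t).
Hypothesis X2_derive : forall t, t <= 0 -> is_derive X2 t (V2 t).
Hypothesis V1_derive : forall t, t <= 0 ->
  is_derive V1 t (- Dt t * V1 t - X1 t / sqrt (sqdist t) ^ 3).
Hypothesis V2_derive : forall t, t <= 0 ->
  is_derive V2 t (- Dt t * V2 t - X2 t / sqrt (sqdist t) ^ 3).
Hypothesis Dt_bounds : forall t, t <= 0 -> 0 <= Dt t <= M.

Lemma damping_bound_nonneg : 0 <= M.
Proof. destruct (Dt_bounds 0); lra. Qed.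

Lemma sqrt_sqdist_pos t : t <= 0 -> 0 < sqrt (sqdist t).
Proof. intros Ht. now apply sqrt_lt_R0, sqdist_pos. Qed.

Lemma sqdist_derive t : t <= 0 -> is_derive sqdist t (2 * radial t).
Proof.
  intros Ht. unfold sqdist. auto_derive.
  - repeat split; eexists; eauto.
  - rewrite (is_derive_unique (fun s : R => X1 s) _ _ (X1_derive _ Ht)),
      (is_derive_unique (fun s : R => X2 s) _ _ (X2_derive _ Ht)).
    unfold radial. ring.
Qed.

Lemma radius_derive t : t <= 0 ->
  is_derive (fun s => sqrt (sqdist s)) t (radial t / sqrt (sqdist t)).
Proof.
  intros Ht. pose proof (sqrt_sqdist_pos t Ht).
  replace (radial t / sqrt (sqdist t)) with (2 * radial t / (2 * sqrt (sqdist t))) by (field; lra).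
  apply is_derive_sqrt; [apply sqdist_derive | apply sqdist_pos]; exact Ht.
Qed.

(* [auto_derive] leaves the unknown derivatives as [Derive (fun x : R => X1 x) t]; the
   eta-expanded, [R]-typed functions below are what makes these terms rewritable. *)
Ltac derive_state Ht :=
  pose proof (sqdist_pos _ Ht); pose proof (sqrt_sqdist_pos _ Ht);
  auto_derive;
  [ repeat split; try (eexists; eauto using sqdist_derive); lra
  | rewrite ?(is_derive_unique (fun s : R => X1 s) _ _ (X1_derive _ Ht)),
      ?(is_derive_unique (fun s : R => X2 s) _ _ (X2_derive _ Ht)),
      ?(is_derive_unique (fun s : R => V1 s) _ _ (V1_derive _ Ht)),
      ?(is_derive_unique (fun s : R => V2 s) _ _ (V2_derive _ Ht)),
      ?(is_derive_unique (fun s : R => sqdist s) _ _ (sqdist_derive _ Ht));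
    rewrite ?sqrt_pow3, ?sqrt_sqrt by lra;
    unfold sqdist, radial, speed2, angmom in *; field; lra ].

Lemma radial_derive t : t <= 0 -> is_derive radial t (radial_slope t).
Proof. intros Ht. unfold radial_slope, radial. derive_state Ht. Qed.

Lemma energy_derive t : t <= 0 -> is_derive energy t (- Dt t * speed2 t).
Proof. intros Ht. unfold energy, speed2. derive_state Ht. Qed.

Lemma angmom_derive t : t <= 0 -> is_derive angmom t (- Dt t * angmom t).
Proof. intros Ht. unfold angmom. derive_state Ht. Qed.

Ltac derive_using f f_derive s :=
  auto_derive;
  [ repeat split; eexists; apply f_derive; lra
  | rewrite (is_derive_unique (fun x : R => f x) _ _ (f_derive s ltac:(lra))) ].

Lemma energy_le t : t <= 0 -> energy 0 <= energy t.
Proof.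
  intros Ht. apply (is_derive_nonpos_ge energy (fun s => - Dt s * speed2 s) t 0 Ht).
  - intros s Hs. apply energy_derive. lra.
  - intros s Hs. destruct (Dt_bounds s ltac:(lra)) as [HD _].
    assert (0 <= speed2 s) by (unfold speed2; nra). nra.
Qed.

Lemma radial_slope_ge t : t <= 0 -> 2 * energy 0 - Dt t * radial t <= radial_slope t.
Proof.
  intros Ht. pose proof (energy_le t Ht). pose proof (sqrt_sqdist_pos t Ht).
  assert (0 < 1 / sqrt (sqdist t)) by (apply Rdiv_lt_0_compat; lra).
  unfold energy, radial_slope in *. lra.
Qed.

Lemma speed2_ge_at_same_radius t : t <= 0 -> sqdist t = sqdist 0 -> speed2 0 <= speed2 t.
Proof. intros Ht Hq. pose proof (energy_le t Ht). unfold energy in *. rewrite Hq in *. lra. Qed.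

Lemma angmom_sq_exp_le t : t <= 0 -> angmom t ^ 2 * exp (2 * M * t) <= angmom 0 ^ 2.
Proof.
  intros Ht.
  enough (H : angmom t ^ 2 * exp (2 * M * t) <= angmom 0 ^ 2 * exp (2 * M * 0))
    by now rewrite Rmult_0_r, exp_0, Rmult_1_r in H.
  apply (is_derive_nonneg_le (fun s => angmom s ^ 2 * exp (2 * M * s))
    (fun s => 2 * (M - Dt s) * angmom s ^ 2 * exp (2 * M * s)) t 0 Ht).
  - intros s Hs. derive_using angmom angmom_derive s. ring.
  - intros s Hs. destruct (Dt_bounds s ltac:(lra)) as [_ HD].
    pose proof (exp_pos (2 * M * s)). pose proof (pow2_ge_0 (angmom s)).
    apply Rmult_le_pos; [apply Rmult_le_pos|]; lra.
Qed.

Lemma radial_exp_le a : -1 <= a <= 0 -> 0 <= energy 0 ->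
  (forall s, a <= s <= 0 -> 0 <= radial s) ->
  radial a * exp (M * a) - 2 * energy 0 * exp (- M) * a <= radial 0.
Proof.
  intros Ha HE Hrad.
  enough (H : radial a * exp (M * a) - 2 * energy 0 * exp (- M) * a <=
              radial 0 * exp (M * 0) - 2 * energy 0 * exp (- M) * 0)
    by (rewrite Rmult_0_r, exp_0 in H; lra).
  apply (is_derive_nonneg_le (fun s => radial s * exp (M * s) - 2 * energy 0 * exp (- M) * s)
    (fun s => (radial_slope s + M * radial s) * exp (M * s) - 2 * energy 0 * exp (- M)) a 0).
  - lra.
  - intros s Hs. derive_using radial radial_derive s. ring.
  - intros s Hs.
    pose proof (radial_slope_ge s ltac:(lra)). destruct (Dt_bounds s ltac:(lra)).
    assert (0 <= (M - Dt s) * radial s) by (apply Rmult_le_pos; [lra | apply Hrad; lra]).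
    assert (exp (- M) <= exp (M * s)) by (apply exp_le; nra).
    pose proof (exp_pos (M * s)). nra.
Qed.

Section Outgoing.

Hypothesis radial0_pos : 0 < radial 0.
Hypothesis energy0_ge : 1 / sqrt (sqdist 0) <= energy 0.
Hypothesis radial0_small : 3 * radial 0 * exp M <= 2 * energy 0.

Definition turn_time := radial 0 * exp M / (2 * energy 0).

Lemma energy0_pos : 0 < energy 0.
Proof.
  pose proof (sqrt_sqdist_pos 0 (Rle_refl 0)).
  assert (0 < 1 / sqrt (sqdist 0)) by (apply Rdiv_lt_0_compat; lra). lra.
Qed.

Lemma energy0_turn_time : 2 * energy 0 * turn_time = radial 0 * exp M.
Proof. pose proof energy0_pos. unfold turn_time. field. lra. Qed.

Lemma turn_time_pos : 0 < turn_time.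
Proof.
  pose proof energy0_pos. pose proof energy0_turn_time. pose proof (exp_pos M). nra.
Qed.

Lemma turn_time_le : 3 * turn_time <= 1.
Proof. pose proof energy0_pos. pose proof energy0_turn_time. nra. Qed.

Lemma radial_nonpos_early : exists s, - turn_time <= s <= 0 /\ radial s <= 0.
Proof.
  pose proof turn_time_pos. pose proof turn_time_le. pose proof energy0_pos.
  apply NNPP. intros Hno.
  assert (Hall : forall s, - turn_time <= s <= 0 -> 0 < radial s).
  { intros s Hs. apply Rnot_le_lt. intros Hle. apply Hno. now exists s. }
  pose proof (radial_exp_le (- turn_time) ltac:(lra) ltac:(lra)
                (fun s Hs => Rlt_le _ _ (Hall s Hs))) as Hgrowth.
  (* the drift term [2 E(0) exp(-M) T] alone already equals [radial 0] *)
  assert (Hdrift : 2 * energy 0 * exp (- M) * turn_time = radial 0).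
  { rewrite Rmult_assoc, (Rmult_comm (exp (- M))), <- Rmult_assoc, energy0_turn_time,
      Rmult_assoc, <- exp_plus, Rplus_opp_r, exp_0. ring. }
  pose proof (Hall (- turn_time) ltac:(lra)).
  pose proof (exp_pos (M * - turn_time)).
  assert (0 < radial (- turn_time) * exp (M * - turn_time)) by (apply Rmult_lt_0_compat; lra).
  lra.
Qed.

Lemma turning_time : exists tf, - turn_time <= tf < 0 /\ radial tf = 0 /\
  (forall t, tf < t <= 0 -> 0 < radial t) /\ (forall t, t < tf -> radial t < 0).
Proof.
  destruct radial_nonpos_early as (s & Hs & Hrs).
  destruct (last_zero radial s 0) as (tf & Htf & Hzero & Hafter); try lra.
  { intros t Ht. apply (is_derive_continuity_pt _ _ _ (radial_derive t ltac:(lra))). }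
  exists tf. repeat split; try lra; auto.
  intros t Ht.
  apply (neg_before_zero radial radial_slope t tf); try lra; auto.
  - intros u Hu. apply radial_derive. lra.
  - intros u Hu Hzu. pose proof (radial_slope_ge u ltac:(lra)). pose proof energy0_pos.
    rewrite Hzu in *. lra.
Qed.

Section Turn.

Variable tf : R.
Hypothesis tf_range : - turn_time <= tf < 0.
Hypothesis radial_tf : radial tf = 0.
Hypothesis radial_pos_after : forall t, tf < t <= 0 -> 0 < radial t.
Hypothesis radial_neg_before : forall t, t < tf -> radial t < 0.

Lemma radial_le_after_turn u : tf <= u <= 0 -> radial u <= radial 0 * exp M.
Proof.
  intros Hu. pose proof turn_time_pos. pose proof turn_time_le. pose proof energy0_pos.
  assert (Hnonneg : forall s, u <= s <= 0 -> 0 <= radial s).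
  { intros s Hs. destruct (Req_dec s tf) as [-> | Hne]; [lra|]. left. apply radial_pos_after. lra. }
  pose proof (radial_exp_le u ltac:(lra) ltac:(lra) Hnonneg) as Hgrowth.
  assert (0 <= - (2 * energy 0 * exp (- M) * u)).
  { pose proof (exp_pos (- M)). assert (0 <= 2 * energy 0 * exp (- M)) by nra. nra. }
  assert (Hinv : exp (M * u) * exp (- (M * u)) = 1)
    by (rewrite <- exp_plus, Rplus_opp_r; apply exp_0).
  assert (exp (- (M * u)) <= exp M) by (apply exp_le; pose proof damping_bound_nonneg; nra).
  pose proof (exp_pos (- (M * u))).
  replace (radial u) with (radial u * exp (M * u) * exp (- (M * u)))
    by (rewrite Rmult_assoc, Hinv; ring).
  apply Rle_trans with (radial 0 * exp (- (M * u))).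
  - apply Rmult_le_compat_r; lra.
  - apply Rmult_le_compat_l; lra.
Qed.

Lemma sqdist_turn_ge : sqdist 0 - 2 * radial 0 * exp M * turn_time <= sqdist tf.
Proof.
  assert (H := is_derive_le_increment sqdist (fun s => 2 * radial 0 * exp M * s)
    (fun s => 2 * radial s) (fun _ => 2 * radial 0 * exp M) tf 0).
  assert (0 <= 2 * radial 0 * exp M) by (pose proof (exp_pos M); nra).
  enough (sqdist 0 - sqdist tf <= 2 * radial 0 * exp M * 0 - 2 * radial 0 * exp M * tf) by nra.
  apply H; try lra.
  - intros t Ht. apply sqdist_derive. lra.
  - intros t Ht. auto_derive; [exact I | ring].
  - intros t Ht. pose proof (radial_le_after_turn t ltac:(lra)). lra.
Qed.

Lemma sqdist_turn_lt : sqdist tf < sqdist 0.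
Proof.
  apply (is_derive_pos_lt sqdist (fun s => 2 * radial s) tf 0); try lra.
  - intros t Ht. apply sqdist_derive. lra.
  - intros t Ht. pose proof (radial_pos_after t ltac:(lra)). lra.
Qed.

Lemma radial_le_before_turn u : u <= tf -> radial u <= 2 * energy 0 * (u - tf).
Proof.
  intros Hu.
  enough (2 * energy 0 * tf - 2 * energy 0 * u <= radial tf - radial u) by lra.
  apply (is_derive_le_increment (fun s => 2 * energy 0 * s) radial
    (fun _ => 2 * energy 0) radial_slope u tf Hu).
  - intros t Ht. auto_derive; [exact I | ring].
  - intros t Ht. apply radial_derive. lra.
  - intros t Ht. pose proof (radial_slope_ge t ltac:(lra)).
    destruct (Dt_bounds t ltac:(lra)). pose proof (radial_neg_before t ltac:(lra)). nra.
Qed.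

Lemma sqdist_ge_before_turn t : t <= tf -> sqdist tf + 2 * energy 0 * (t - tf) ^ 2 <= sqdist t.
Proof.
  intros Ht.
  enough (sqdist tf - sqdist t <= 2 * energy 0 * (tf - tf) ^ 2 - 2 * energy 0 * (t - tf) ^ 2)
    by (replace (tf - tf) with 0 in * by ring; lra).
  apply (is_derive_le_increment sqdist (fun s => 2 * energy 0 * (s - tf) ^ 2)
    (fun s => 2 * radial s) (fun s => 4 * energy 0 * (s - tf)) t tf Ht).
  - intros s Hs. apply sqdist_derive. lra.
  - intros s Hs. auto_derive; [exact I | ring].
  - intros s Hs. pose proof (radial_le_before_turn s ltac:(lra)). lra.
Qed.

Lemma return_time : exists tau, tf - 2 * turn_time <= tau < tf /\ sqdist tau = sqdist 0.
Proof.
  pose proof turn_time_pos. pose proof energy0_turn_time.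
  pose proof sqdist_turn_ge. pose proof sqdist_turn_lt.
  assert (Hfar : sqdist 0 <= sqdist (tf - 2 * turn_time)).
  { pose proof (sqdist_ge_before_turn (tf - 2 * turn_time) ltac:(lra)) as Hgrow.
    replace ((tf - 2 * turn_time - tf) ^ 2) with (4 * turn_time * turn_time) in Hgrow by ring.
    nra. }
  destruct (last_zero (fun s => sqdist 0 - sqdist s) (tf - 2 * turn_time) tf)
    as (tau & Htau & Hzero & _); try lra.
  - intros s Hs. apply continuity_pt_minus; [apply continuity_pt_const; now intros ? ?|].
    apply (is_derive_continuity_pt _ _ _ (sqdist_derive s ltac:(lra))).
  - exists tau. split; [exact Htau | lra].
Qed.

End Turn.

Lemma radial_sq_at_return tau : - 3 * turn_time <= tau <= 0 -> sqdist tau = sqdist 0 ->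
  radial 0 ^ 2 - 12 * M * sqdist 0 * exp (3 * M) * radial 0 <= radial tau ^ 2.
Proof.
  intros Htau Hq.
  pose proof damping_bound_nonneg. pose proof turn_time_pos. pose proof turn_time_le.
  pose proof energy0_turn_time. pose proof (sqdist_pos 0 (Rle_refl 0)).
  set (x := - (2 * M * tau)). set (y := exp x).
  assert (Hx : 0 <= x <= 6 * M * turn_time) by (unfold x; nra).
  assert (Hy1 : 1 <= y) by (unfold y; rewrite <- exp_0; apply exp_le; lra).
  assert (Hy2 : y <= exp (2 * M)) by (unfold y; apply exp_le; nra).
  assert (Hyx : y - 1 <= 6 * M * turn_time * exp (2 * M)).
  { pose proof (exp_sub1_le x (proj1 Hx)) as Hsub. fold y in Hsub.
    assert (x * y <= 6 * M * turn_time * exp (2 * M)) by (apply Rmult_le_compat; lra). lra. }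
  assert (Hc : angmom tau ^ 2 <= angmom 0 ^ 2 * y).
  { pose proof (angmom_sq_exp_le tau (proj2 Htau)) as Hdecay.
    assert (Hinv : exp (2 * M * tau) * y = 1)
      by (unfold y, x; rewrite <- exp_plus, Rplus_opp_r; apply exp_0).
    replace (angmom tau ^ 2) with (angmom tau ^ 2 * exp (2 * M * tau) * y)
      by (rewrite Rmult_assoc, Hinv; ring).
    apply Rmult_le_compat_r; lra. }
  assert (Hw : speed2 0 <= speed2 tau) by now apply speed2_ge_at_same_radius.
  assert (Hw0 : speed2 0 <= 4 * energy 0) by (unfold energy in *; lra).
  pose proof (lagrange_identity 0). pose proof (lagrange_identity tau).
  pose proof (pow2_ge_0 (angmom 0)). pose proof (pow2_ge_0 (radial 0)).
  assert (Hloss : angmom 0 ^ 2 * (y - 1) <=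
                  sqdist 0 * (4 * energy 0) * (6 * M * turn_time * exp (2 * M))).
  { apply Rmult_le_compat; try lra. nra. }
  assert (Hconst : 12 * M * sqdist 0 * exp (3 * M) * radial 0 =
                   sqdist 0 * (4 * energy 0) * (6 * M * turn_time * exp (2 * M))).
  { transitivity (12 * M * sqdist 0 * exp (2 * M) * (2 * energy 0 * turn_time)).
    - rewrite energy0_turn_time. replace (3 * M) with (2 * M + M) by ring.
      rewrite exp_plus. ring.
    - ring. }
  rewrite Hconst. rewrite Hq in *. nra.
Qed.

Lemma turn_and_return : exists tf tau,
  - turn_time <= tf < 0 /\ radial tf = 0 /\
  (forall t, tf < t <= 0 -> 0 < radial t) /\ (forall t, t < tf -> radial t < 0) /\
  - 3 * turn_time <= tau < tf /\ sqdist tau = sqdist 0 /\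
  radial 0 ^ 2 - 12 * M * sqdist 0 * exp (3 * M) * radial 0 <= radial tau ^ 2.
Proof.
  destruct turning_time as (tf & Htf & Hzero & Hafter & Hbefore).
  destruct (return_time tf Htf Hzero Hafter Hbefore) as (tau & Htau & Hq).
  exists tf, tau. pose proof turn_time_pos.
  repeat split; auto; try lra.
  apply radial_sq_at_return; [lra | exact Hq].
Qed.

End Outgoing.

Lemma turn_and_return_fast r0 V : 0 < r0 -> sqrt (sqdist 0) = r0 -> radial 0 = r0 * V ->
  1 + 4 / r0 + 6 * r0 * exp M + 12 * M * r0 * exp (3 * M) < V ->
  exists tf tau, tf < 0 /\ radial tf = 0 /\
    (forall t, tf < t <= 0 -> 0 < radial t) /\ (forall t, t < tf -> radial t < 0) /\
    - (6 * r0 * exp M / V) <= tau < tf /\ sqdist tau = sqdist 0 /\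
    radial tau <= r0 * (12 * M * r0 * exp (3 * M) - V).
Proof.
  intros Hr0 Hsqrt Hrad HV.
  set (B := 12 * M * r0 * exp (3 * M)).
  pose proof damping_bound_nonneg. pose proof (exp_pos M). pose proof (exp_pos (3 * M)).
  assert (HB : 0 <= B) by (unfold B; apply Rmult_le_pos; [nra | lra]).
  assert (0 < 4 / r0) by (apply Rdiv_lt_0_compat; lra).
  assert (Hq0 : sqdist 0 = r0 ^ 2)
    by (rewrite <- Hsqrt, pow2_sqrt; [reflexivity | pose proof (sqdist_pos 0); lra]).
  assert (0 < 6 * r0 * exp M) by nra.
  assert (HV1 : 1 < V) by (unfold B in *; lra).
  assert (HVe : 6 * r0 * exp M < V) by (unfold B in *; lra).
  assert (HV4 : 4 / r0 < V * V) by (assert (4 / r0 < V) by (unfold B in *; lra); nra).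
  assert (Hw : V * V <= speed2 0).
  { pose proof (lagrange_identity 0). pose proof (pow2_ge_0 (angmom 0)).
    rewrite Hq0, Hrad in *. apply (Rmult_le_reg_l (r0 ^ 2)); [nra | lra]. }
  assert (HE : V * V / 2 - 1 / r0 <= energy 0) by (unfold energy; rewrite Hsqrt; lra).
  assert (HE2 : V * V / 2 <= 2 * energy 0) by (unfold Rdiv in *; nra).
  destruct (turn_and_return) as (tf & tau & Htf & Hzero & Hafter & Hbefore & Htau & Hq & Hsq).
  { rewrite Hrad. nra. }
  { rewrite Hsqrt. unfold Rdiv in *. nra. }
  { rewrite Hrad. nra. }
  exists tf, tau. repeat split; auto; try lra.
  - enough (3 * turn_time <= 6 * r0 * exp M / V) by lra.
    unfold turn_time. rewrite Hrad.
    apply Rle_trans with (3 * (r0 * V * exp M / (V * V / 2))).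
    + apply Rmult_le_compat_l; [lra|]. apply Rmult_le_compat_l; [nra|].
      apply Rinv_le_contravar; nra.
    + right. field. lra.
  - rewrite Hq0, Hrad in Hsq.
    replace ((r0 * V) ^ 2 - 12 * M * r0 ^ 2 * exp (3 * M) * (r0 * V))
      with (r0 ^ 2 * (V * V - B * V)) in Hsq by (unfold B; ring).
    assert (Hneg : radial tau < 0) by (apply Hbefore; lra).
    assert (B <= V) by (unfold B in *; lra).
    assert (0 <= r0 ^ 2 * (B * (V - B))) by (apply Rmult_le_pos; nra).
    assert ((r0 * (V - B)) ^ 2 <= radial tau ^ 2)
      by (replace ((r0 * (V - B)) ^ 2) with (r0 ^ 2 * (V * V - B * V) - r0 ^ 2 * (B * (V - B)))
            by ring; lra).
    assert (0 <= r0 * (V - B)) by nra. nra.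
Qed.

End DampedKepler.

Lemma sum_sq_pos a b : (a, b) <> (0, 0) -> 0 < a ^ 2 + b ^ 2.
Proof.
  intros Hab. pose proof (pow2_ge_0 a). pose proof (pow2_ge_0 b).
  destruct (Req_dec a 0) as [-> | Ha].
  - destruct (Req_dec b 0) as [-> | Hb]; [contradiction|].
    pose proof (pow2_gt_0 b Hb). lra.
  - pose proof (pow2_gt_0 a Ha). lra.
Qed.

Lemma solution_extends (D : R -> R -> R) M (x1 x2 v1 v2 : R -> R) :
  (forall y1 y2, (y1, y2) <> (0, 0) -> 0 <= D y1 y2) ->
  (forall y1 y2, (y1, y2) <> (0, 0) -> Rabs (D y1 y2) <= M) ->
  is_solution D x1 x2 v1 v2 ->
  exists X1 X2 V1 V2 : R -> R,
    (forall t, t <= 0 -> X1 t = x1 t /\ X2 t = x2 t) /\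
    (forall t, t <= 0 -> 0 < sqdist X1 X2 t) /\
    (forall t, t <= 0 -> is_derive X1 t (V1 t)) /\
    (forall t, t <= 0 -> is_derive X2 t (V2 t)) /\
    (forall t, t <= 0 -> is_derive V1 t
       (- D (X1 t) (X2 t) * V1 t - X1 t / sqrt (sqdist X1 X2 t) ^ 3)) /\
    (forall t, t <= 0 -> is_derive V2 t
       (- D (X1 t) (X2 t) * V2 t - X2 t / sqrt (sqdist X1 X2 t) ^ 3)) /\
    (forall t, t <= 0 -> 0 <= D (X1 t) (X2 t) <= M).
Proof.
  intros HDnn HDbd Hsol.
  set (a1 := fun t => - D (x1 t) (x2 t) * v1 t - x1 t / nrm (x1 t) (x2 t) ^ 3).
  set (a2 := fun t => - D (x1 t) (x2 t) * v2 t - x2 t / nrm (x1 t) (x2 t) ^ 3).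
  exists (extend x1 (v1 0)), (extend x2 (v2 0)), (extend v1 (a1 0)), (extend v2 (a2 0)).
  unfold sqdist.
  split; [|split; [|split; [|split; [|split; [|split]]]]]; intros t Ht;
    rewrite ?(extend_le x1), ?(extend_le x2), ?(extend_le v1), ?(extend_le v2) by exact Ht;
    destruct (Hsol t Ht) as (Hnz & _).
  - split; reflexivity.
  - now apply sum_sq_pos.
  - apply is_derive_extend; [apply Hsol | exact Ht].
  - apply is_derive_extend; [apply Hsol | exact Ht].
  - apply (is_derive_extend v1 a1); [apply Hsol | exact Ht].
  - apply (is_derive_extend v2 a2); [apply Hsol | exact Ht].
  - split; [now apply HDnn|].
    pose proof (Rle_abs (D (x1 t) (x2 t))). pose proof (HDbd _ _ Hnz). lra.
Qed.

Definition turn_return_pair (r rd : R -> R) (rs A B tf tau : R) : Prop :=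
  tf < 0 /\ rd tf = 0 /\ (forall t, tf < t < 0 -> 0 < rd t) /\ (forall t, t < tf -> rd t < 0) /\
  tau < tf /\ r tau = rs /\ - (A / rd 0) <= tau /\ rd tau <= B - rd 0.

Lemma solution_turn_and_return (D : R -> R -> R) M (x1 x2 v1 v2 rd : R -> R) rs :
  (forall y1 y2, (y1, y2) <> (0, 0) -> 0 <= D y1 y2) ->
  (forall y1 y2, (y1, y2) <> (0, 0) -> Rabs (D y1 y2) <= M) ->
  is_solution D x1 x2 v1 v2 ->
  (forall t, t <= 0 -> ldrv (fun s => nrm (x1 s) (x2 s)) t (rd t)) ->
  0 < rs -> nrm (x1 0) (x2 0) = rs ->
  1 + 4 / rs + 6 * rs * exp M + 12 * M * rs * exp (3 * M) < rd 0 ->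
  exists tf tau, turn_return_pair (fun s => nrm (x1 s) (x2 s)) rd rs
                   (6 * rs * exp M) (12 * M * rs * exp (3 * M)) tf tau.
Proof.
  intros HDnn HDbd Hsol Hrd Hrs Hr0 HV.
  destruct (solution_extends D M x1 x2 v1 v2 HDnn HDbd Hsol)
    as (X1 & X2 & V1 & V2 & Hagree & Hpos & HX1 & HX2 & HV1 & HV2 & HD).
  assert (Hnrm : forall t, t <= 0 -> nrm (x1 t) (x2 t) = sqrt (sqdist X1 X2 t)).
  { intros t Ht. unfold sqdist. now destruct (Hagree t Ht) as [-> ->]. }
  assert (Hrd_radial : forall t, t <= 0 ->
            rd t = radial X1 X2 V1 V2 t / sqrt (sqdist X1 X2 t)).
  { intros t Ht. apply (ldrv_unique (fun s => nrm (x1 s) (x2 s)) t); [exact Ht | now apply Hrd |].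
    apply (ldrv_ext (fun s => sqrt (sqdist X1 X2 s))); [exact Ht | now symmetry; apply Hnrm |].
    now apply ldrv_of_is_derive, radius_derive. }
  assert (Hsqrt0 : sqrt (sqdist X1 X2 0) = rs) by (rewrite <- Hnrm; lra).
  assert (Hrad0 : radial X1 X2 V1 V2 0 = rs * rd 0)
    by (rewrite Hrd_radial, Hsqrt0 by lra; field; lra).
  destruct (turn_and_return_fast X1 X2 V1 V2 _ M Hpos HX1 HX2 HV1 HV2 HD
              rs (rd 0) Hrs Hsqrt0 Hrad0 HV)
    as (tf & tau & Htf & Hzero & Hafter & Hbefore & Htau & Hq & Hbound).
  pose proof (fun t Ht => sqrt_lt_R0 _ (Hpos t Ht)) as Hr.
  exists tf, tau. repeat split; try lra.
  - rewrite Hrd_radial, Hzero by lra. unfold Rdiv. ring.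
  - intros t Ht. rewrite Hrd_radial by lra. apply Rdiv_lt_0_compat; [apply Hafter | apply Hr]; lra.
  - intros t Ht. rewrite Hrd_radial by lra. apply Rdiv_neg_pos; [apply Hbefore | apply Hr]; lra.
  - rewrite Hnrm, Hq by lra. exact Hsqrt0.
  - rewrite Hrd_radial, Hq, Hsqrt0 by lra.
    apply (Rmult_le_reg_l rs); [exact Hrs|]. field_simplify; lra.
Qed.

Lemma is_lim_seq_squeeze_inv (u s : nat -> R) (A : R) : is_lim_seq u p_infty ->
  eventually (fun n => - (A / u n) <= s n <= 0) -> is_lim_seq s 0.
Proof.
  intros Hu Hs.
  apply (is_lim_seq_le_le_loc (fun n => - (A / u n)) s (fun _ => 0));
    [exact Hs | | apply is_lim_seq_const].
  assert (Hinv := is_lim_seq_inv u p_infty Hu ltac:(discriminate)).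
  assert (Hlim := proj1 (is_lim_seq_opp _ _) (is_lim_seq_scal_l _ A _ Hinv)).
  simpl in Hlim. now rewrite Rmult_0_r, Ropp_0 in Hlim.
Qed.

Theorem lemma7p2
  (D : R -> R -> R)
  (HDnn : forall y1 y2 : R, (y1, y2) <> (0, 0) -> 0 <= D y1 y2)
  (HDbd : exists M : R, forall y1 y2 : R, (y1, y2) <> (0, 0) -> Rabs (D y1 y2) <= M)
  (HDC1 : C1_punctured D)
  (x1 x2 v1 v2 rd : nat -> R -> R)
  (Hsol : forall n, is_solution D (x1 n) (x2 n) (v1 n) (v2 n))
  (Hnr : forall n, nonrectilinear (x1 n) (x2 n) (v1 n) (v2 n))
  (Hrd : forall n t, t <= 0 ->
     ldrv (fun s => nrm (x1 n s) (x2 n s)) t (rd n t))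
  (rstar : R) (Hrstar : 0 < rstar)
  (Hr0 : forall n, nrm (x1 n 0) (x2 n 0) = rstar)
  (Hrd0 : is_lim_seq (fun n => rd n 0) p_infty) :
  exists (N : nat) (tf tau : nat -> R),
    (forall n, (N <= n)%nat ->
       tf n < 0 /\ rd n (tf n) = 0 /\
       (forall t, tf n < t < 0 -> 0 < rd n t) /\
       (forall t, t < tf n -> rd n t < 0) /\
       tau n < tf n /\ nrm (x1 n (tau n)) (x2 n (tau n)) = rstar) /\
    is_lim_seq tf 0 /\
    is_lim_seq tau 0 /\
    is_lim_seq (fun n => rd n (tau n)) m_infty.
Proof.
  (* [HDC1] and [Hnr] only serve, in the paper, to make the solutions exist on all of
     ]-oo,0]; here this is part of the hypotheses. *)
  destruct HDbd as [M HM].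
  set (A := 6 * rstar * exp M). set (B := 12 * M * rstar * exp (3 * M)).
  set (K := 1 + 4 / rstar + A + B).
  destruct (choice (fun n p => K < rd n 0 ->
    turn_return_pair (fun s => nrm (x1 n s) (x2 n s)) (rd n) rstar A B (fst p) (snd p)))
    as [p Hp].
  { intros n. destruct (Rlt_dec K (rd n 0)) as [HK | HK].
    - destruct (solution_turn_and_return D M (x1 n) (x2 n) (v1 n) (v2 n) (rd n) rstar
        HDnn HM (Hsol n) (Hrd n) Hrstar (Hr0 n) HK) as (tf & tau & Hpair).
      now exists (tf, tau).
    - now exists (0, 0). }
  assert (Hlarge : eventually (fun n => K < rd n 0)) by (apply Hrd0; now exists K).
  destruct Hlarge as [N HN].
  assert (Hpair : forall n, (N <= n)%nat ->
    turn_return_pair (fun s => nrm (x1 n s) (x2 n s)) (rd n) rstar A B (fst (p n)) (snd (p n)))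
    by (intros n Hn; apply Hp, HN, Hn).
  exists N, (fun n => fst (p n)), (fun n => snd (p n)). split; [|split; [|split]].
  - intros n Hn. destruct (Hpair n Hn) as (? & ? & ? & ? & ? & ? & _). now repeat split.
  - apply (is_lim_seq_squeeze_inv _ _ A Hrd0). exists N. intros n Hn.
    destruct (Hpair n Hn) as (? & _ & _ & _ & ? & _ & ? & _). lra.
  - apply (is_lim_seq_squeeze_inv _ _ A Hrd0). exists N. intros n Hn.
    destruct (Hpair n Hn) as (? & _ & _ & _ & ? & _ & ? & _). lra.
  - apply (is_lim_seq_le_m_loc (fun n => B - rd n 0)).
    + exists N. intros n Hn. now destruct (Hpair n Hn) as (_ & _ & _ & _ & _ & _ & _ & ?).
    + apply (is_lim_seq_minus _ _ B p_infty); [apply is_lim_seq_const | exact Hrd0 | reflexivity].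
Qed.
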